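(* Let $R$ be a unital ring with involution, let $a\in R$ be core invertible, and let $b\in R$. Then the following conditions are equivalent: (1) $a\overset{\circledast}{\leq} b$; (2) there exists $p\in R$ with $p^2=p=p^{*}$ such that $a=pb$, $ap=bp$ and $aR=pR$; (3) there exists $p\in R$ with $p^2=p=p^{*}$ such that $a=pb$ and $ap=bp$; (4) there exists $p\in R$ with $p^2=p=p^{*}$ such that, writing $x_{11}=pxp$, $x_{12}=px(1-p)$, $x_{21}=(1-p)xp$, $x_{22}=(1-p)x(1-p)$ for $x\in R$, one has $a_{21}=0$, $a_{22}=0$, $b_{11}=a_{11}$, $b_{12}=a_{12}$ and $b_{21}=0$ (i.e. in matrix form relative to $p$, $a=\begin{pmatrix}a_1&a_2\\0&0\end{pmatrix}$ and $b=\begin{pmatrix}a_1&a_2\\0&b_4\end{pmatrix}$).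
   Context: $R$ is a ring with identity and an involution $x\mapsto x^{*}$. An element $a\in R$ is core invertible if there exists $x\in R$ with $axa=a$, $xR=aR$ and $Rx=Ra^{*}$; such $x$ is unique, called the core inverse of $a$ and denoted $a^{\circledast}$. For $a$ core invertible and $b\in R$, $a\overset{\circledast}{\leq} b$ means $a^{\circledast}a=a^{\circledast}b$ and $aa^{\circledast}=ba^{\circledast}$. $aR=\{ax:x\in R\}$. *)

From HB Require Import structures.
From mathcomp Require Import all_boot all_order all_algebra.
Set Implicit Arguments. Unset Strict Implicit. Unset Printing Implicit Defensive.
Import GRing.Theory.
Local Open Scope ring_scope.

Definition is_involution (R : pzRingType) (star : R -> R) : Prop :=
  (forall x y : R, star (x + y) = star x + star y) /\
  (forall x y : R, star (x * y) = star y * star x) /\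
  (forall x : R, star (star x) = x).

Definition rideal_eq (R : pzRingType) (x y : R) : Prop :=
  forall z : R, (exists u, z = x * u) <-> (exists v, z = y * v).

Definition lideal_eq (R : pzRingType) (x y : R) : Prop :=
  forall z : R, (exists u, z = u * x) <-> (exists v, z = v * y).

Definition is_core_inverse (R : pzRingType) (star : R -> R) (a x : R) : Prop :=
  a * x * a = a /\ rideal_eq x a /\ lideal_eq x (star a).

Definition core_invertible (R : pzRingType) (star : R -> R) (a : R) : Prop :=
  exists x, is_core_inverse star a x.

(* a <=core b : a^core a = a^core b and a a^core = b a^core.
   The core inverse is unique, so quantifying existentially over it
   refers to THE core inverse of a. *)
Definition core_le (R : pzRingType) (star : R -> R) (a b : R) : Prop :=
  exists x, is_core_inverse star a x /\ x * a = x * b /\ a * x = b * x.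

Definition is_projection (R : pzRingType) (star : R -> R) (p : R) : Prop :=
  p * p = p /\ p = star p.

From HB Require Import structures.
From mathcomp Require Import all_boot all_order all_algebra.
Import GRing.Theory.
Local Open Scope ring_scope.
Set Implicit Arguments.
Unset Strict Implicit.
Unset Printing Implicit Defensive.

(* For a core inverse x of a, the element a x is a projection with range aR,
   and x a a = a.  Hence (1) gives (2) with p := a x.  Conversely, any
   projection p with a = p b and a p = b p fixes a on the left; the two
   equations of a <=core b then follow from x ∈ R a^* = R b^* p, and from
   x ∈ aR together with b a = b p a = a p a = a a.  Condition (4) is the
   Peirce-block reading of (3): its first two entries say (1 - p) a = 0. *)

Lemma rideal_eq_factors (R : pzRingType) (x y : R) :
  rideal_eq x y -> (exists u, x = y * u) /\ (exists v, y = x * v).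
Proof.
move=> exy; split; first by apply/exy; exists 1; rewrite mulr1.
by apply/exy; exists 1; rewrite mulr1.
Qed.

Lemma rideal_eq_intro (R : pzRingType) (x y : R) :
  (exists u, x = y * u) -> (exists v, y = x * v) -> rideal_eq x y.
Proof.
move=> [u ->] [v yv] z; split=> [[w ->]|[w ->]].
  by exists (u * w); rewrite mulrA.
by exists (v * w); rewrite {1}yv !mulrA.
Qed.

Lemma lideal_eq_factor (R : pzRingType) (x y : R) :
  lideal_eq x y -> exists w, x = w * y.
Proof. by move=> exy; apply/exy; exists 1; rewrite mul1r. Qed.

Lemma mul_idem_range (R : pzRingType) (p x y : R) :
  p * p = p -> x = p * y -> p * x = x.
Proof. by move=> pp ->; rewrite mulrA pp. Qed.

Lemma mul_compl_split_l (R : pzRingType) (p x : R) : p * x + (1 - p) * x = x.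
Proof. by rewrite -mulrDl addrC subrK mul1r. Qed.

Lemma mul_compl_split_r (R : pzRingType) (p x : R) : x * p + x * (1 - p) = x.
Proof. by rewrite -mulrDr addrC subrK mulr1. Qed.

Lemma mul_compl_eq0 (R : pzRingType) (p x : R) : p * x = x -> (1 - p) * x = 0.
Proof. by move=> px; rewrite mulrBl mul1r px subrr. Qed.

Section CoreInverse.

Variables (R : pzRingType) (star : R -> R).
Hypothesis star_inv : is_involution star.

Let starM x y : star (x * y) = star y * star x.
Proof. by case: star_inv => _ []. Qed.

Let starK x : star (star x) = x.
Proof. by case: star_inv => _ []. Qed.

Section Facts.

Variables a x : R.
Hypothesis cx : is_core_inverse star a x.

Lemma core_inverse_adjoint : star (a * x) = a * x.
Proof.
have [axa [_ lx]] := cx; have [w xw] := lideal_eq_factor lx.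
have x_adj : x * star (a * x) = x by rewrite {1}xw -mulrA -starM axa -xw.
have ax_adj : a * x = a * x * star (a * x) by rewrite -mulrA x_adj.
by rewrite {1}ax_adj starM starK -ax_adj.
Qed.

Lemma core_inverse_reflexive : x * a * x = x.
Proof.
have [_ [_ lx]] := cx; have [w xw] := lideal_eq_factor lx.
have [axa _] := cx.
by rewrite -mulrA -core_inverse_adjoint {1}xw -mulrA -starM axa -xw.
Qed.

Lemma core_inverse_mulaa : x * a * a = a.
Proof.
have [_ [rx _]] := cx; have [_ [v av]] := rideal_eq_factors rx.
by rewrite {2 3}av !mulrA core_inverse_reflexive.
Qed.

End Facts.

Lemma core_le_projection (a b : R) :
  core_le star a b ->
  exists p, [/\ is_projection star p, a = p * b, a * p = b * p & rideal_eq a p].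
Proof.
move=> [x [cx [xab axb]]]; have [axa _] := cx.
exists (a * x); split.
- by split; [rewrite mulrA axa | rewrite core_inverse_adjoint].
- by rewrite -mulrA -xab mulrA axa.
- have -> : b * (a * x) = b * x * (a * a) * x.
    by rewrite -(mulrA b x) (mulrA x) (core_inverse_mulaa cx) mulrA.
  by rewrite -axb !mulrA axa.
- by apply: rideal_eq_intro; [exists a; rewrite axa | exists x].
Qed.

Lemma projection_core_le (a b p : R) :
  core_invertible star a -> is_projection star p ->
  a = p * b -> a * p = b * p -> core_le star a b.
Proof.
move=> [x cx] [pp ps] apb abp; have pa := mul_idem_range pp apb.
have [_ [rx lx]] := cx.
have [w xw] := lideal_eq_factor lx; have [[u xu] _] := rideal_eq_factors rx.
exists x; split=> //; split.
  apply/eqP; rewrite -subr_eq0 -mulrBr xw {1}apb starM -ps -!mulrA.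
  by rewrite mulrBr pa -apb subrr !mulr0.
have ba : b * a = a * a by rewrite -{1}pa mulrA -abp -mulrA pa.
by rewrite xu !mulrA ba.
Qed.

End CoreInverse.

Lemma peirce_blocks_of_range (R : pzRingType) (p a b : R) :
  p * p = p -> a = p * b -> a * p = b * p ->
  [/\ (1 - p) * a * p = 0, (1 - p) * a * (1 - p) = 0,
      p * b * p = p * a * p, p * b * (1 - p) = p * a * (1 - p)
    & (1 - p) * b * p = 0].
Proof.
move=> pp apb abp; have /mul_compl_eq0 pa0 := mul_idem_range pp apb.
rewrite pa0 !mul0r -apb (mul_idem_range pp apb); split=> //.
by rewrite -mulrA -abp mulrA pa0 mul0r.
Qed.

Lemma range_of_peirce_blocks (R : pzRingType) (p a b : R) :
  [/\ (1 - p) * a * p = 0, (1 - p) * a * (1 - p) = 0,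
      p * b * p = p * a * p, p * b * (1 - p) = p * a * (1 - p)
    & (1 - p) * b * p = 0] ->
  a = p * b /\ a * p = b * p.
Proof.
move=> [e1 e2 e3 e4 e5].
have pa : p * a = a.
  by rewrite -[RHS](mul_compl_split_l p) -[(1 - p) * a](mul_compl_split_r p) e1 e2 !addr0.
split.
  by rewrite -(mul_compl_split_r p (p * b)) e3 e4 mul_compl_split_r pa.
by rewrite -(mul_compl_split_l p (b * p)) !mulrA e3 e5 addr0 pa.
Qed.

Theorem theorem2p4 (R : pzRingType) (star : R -> R) (a b : R) :
  is_involution star -> core_invertible star a ->
  [/\ (core_le star a b <->
        exists p, [/\ is_projection star p, a = p * b, a * p = b * p
                    & rideal_eq a p]),
      ((exists p, [/\ is_projection star p, a = p * b, a * p = b * p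
                    & rideal_eq a p]) <->
        exists p, [/\ is_projection star p, a = p * b & a * p = b * p])
    & ((exists p, [/\ is_projection star p, a = p * b & a * p = b * p]) <->
        exists p, is_projection star p /\
          [/\ (1 - p) * a * p = 0, (1 - p) * a * (1 - p) = 0,
              p * b * p = p * a * p, p * b * (1 - p) = p * a * (1 - p)
            & (1 - p) * b * p = 0])].
Proof.
move=> inv ca.
have proj_le p : [/\ is_projection star p, a = p * b & a * p = b * p] ->
    core_le star a b.
  by case=> P apb abp; exact: projection_core_le ca P apb abp.
split; split.
- exact: core_le_projection.
- by case=> p [P apb abp _]; apply: (proj_le p).
- by case=> p [P apb abp _]; exists p.
- by case=> p /proj_le; exact: core_le_projection.
- case=> p [[pp ps] apb abp]; exists p.
  by split; [split | exact: peirce_blocks_of_range].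
- by case=> p [P /range_of_peirce_blocks [apb abp]]; exists p.
Qed.
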